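(* Let $G$ be a finite connected $k$-regular simple graph on $n\ge 2$ vertices, and let $\mu_1$ be the second largest eigenvalue of its adjacency matrix. Then $$k-\mu_1 < 2k\,\lambda(G)\sqrt{\frac{n}{\lfloor n/2\rfloor}}.$$
   Context: The eigenvalues of the adjacency matrix of $G$ are listed as $\mu_0\ge\mu_1\ge\cdots\ge\mu_{n-1}$ (so $\mu_0=k$ for connected $k$-regular $G$). An $L(2,1)$-colouring of $G$ is a map $f:V\to\mathbb{Z}_{\ge 0}$ with $|f(u)-f(v)|\ge 2$ whenever $u,v$ are adjacent and $|f(u)-f(v)|\ge 1$ whenever $u,v$ are at distance two. Its span is $\max f-\min f$, and $\lambda(G)$ denotes the minimum span over all $L(2,1)$-colourings of $G$. *)

From HB Require Import structures.
From mathcomp Require Import all_boot all_order all_algebra.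
Set Implicit Arguments. Unset Strict Implicit. Unset Printing Implicit Defensive.
Import Order.TTheory GRing.Theory Num.Theory.

Definition simple_graph (n : nat) (e : rel 'I_n) : Prop :=
  symmetric e /\ irreflexive e.

Definition regular (n : nat) (e : rel 'I_n) (k : nat) : Prop :=
  forall v : 'I_n, #|[set w | e v w]| = k.

Definition connected_graph (n : nat) (e : rel 'I_n) : Prop :=
  forall u v : 'I_n, connect e u v.

Definition adjmx (R : nzRingType) (n : nat) (e : rel 'I_n) : 'M[R]_n :=
  (\matrix_(i, j) (e i j)%:R)%R.

Definition dist2 (n : nat) (e : rel 'I_n) (u v : 'I_n) : bool :=
  [&& u != v, ~~ e u v & [exists w, e u w && e w v]].

Definition L21_colouring (n : nat) (e : rel 'I_n) (f : 'I_n -> nat) : Prop :=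
  (forall u v, e u v -> (2 <= `|f u - f v|)%N) /\
  (forall u v, dist2 e u v -> f u != f v).

(* span = max f - min f (truncated subtraction makes the double max exact). *)
Definition span (n : nat) (f : 'I_n -> nat) : nat :=
  \max_(u : 'I_n) \max_(v : 'I_n) (f u - f v).

Definition is_lambda21 (n : nat) (e : rel 'I_n) (l : nat) : Prop :=
  (exists f, L21_colouring e f /\ span f = l) /\
  (forall f, L21_colouring e f -> l <= span f).

(* s is the list of eigenvalues of A (with multiplicity) in non-increasing
   order: mu_0 >= mu_1 >= ... >= mu_(n-1). *)
Definition eigen_list (R : realFieldType) (n : nat) (A : 'M[R]_n) (s : seq R) : Prop :=
  [/\ size s = n, sorted (>=%R) s & char_poly A = \prod_(x <- s) ('X - x%:P)]%R.

From Pilot Require Import Defs.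
From HB Require Import structures.
From mathcomp Require Import all_boot all_order all_algebra.
From mathcomp Require Import zify lra.
Import Order.TTheory GRing.Theory Num.Theory.
Local Open Scope ring_scope.

(* The inequality k - mu_1 < 2 k lambda(G) sqrt(n / floor(n/2)) follows from
   four elementary facts, established in this order:
   - every eigenvalue a of the adjacency matrix of a k-regular graph satisfies
     |a| <= k (look at a coordinate of maximal modulus of an eigenvector and
     bound it by the k neighbouring coordinates), hence k - mu_1 <= 2k;
   - a connected graph on at least two vertices has an edge, so k >= 1;
   - the span of a colouring dominates every difference f u - f v, so an
     L(2,1)-colouring of a graph with an edge has span >= 2, i.e. lambda >= 2;
   - for n >= 2, the ratio n / floor(n/2) is at least 1, and so is its root.
   Together: k - mu_1 <= 2k < 4k <= 2 k lambda <= 2 k lambda sqrt(n/floor(n/2)). *)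

(* In a symmetric k-regular graph every column of the adjacency matrix sums
   to k; this is what a left eigenvector sees. *)
Lemma adjmx_col_sum (R : nzRingType) {n k : nat} {e : rel 'I_n} (i : 'I_n) :
  symmetric e -> regular e k -> \sum_j (adjmx R e) j i = k%:R.
Proof.
move=> sym reg; rewrite -(reg i) -sum1dep_card natr_sum [RHS]big_mkcond /=.
by apply: eq_bigr => j _; rewrite mxE sym; case: (e i j).
Qed.

Lemma row_max_coord {R : realDomainType} {n : nat} (v : 'rV[R]_n) :
  v != 0 -> exists2 i, v 0 i != 0 & forall j, `|v 0 j| <= `|v 0 i|.
Proof.
move=> vn0; have [i0 _] : exists i0 : 'I_n, true.
  case: n v vn0 => [|m] v vn0; last by exists ord0.
  by case/eqP: vn0; apply/matrixP => ? [].
have [i _ imax] := @arg_maxP _ R _ i0 predT (fun j => `|v 0 j|) isT.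
exists i => [|j]; last exact: imax.
apply: contra vn0 => /eqP vi0; apply/eqP/matrixP => p j; rewrite (ord1 p) mxE.
by apply/eqP; rewrite -normr_le0 -(normr0 R) -vi0; exact: imax.
Qed.

Lemma adj_eigenvalue_norm {R : rcfType} {n k : nat} {e : rel 'I_n} {a : R} :
  symmetric e -> regular e k -> root (char_poly (adjmx R e)) a -> `|a| <= k%:R.
Proof.
move=> sym reg; rewrite -eigenvalue_root_char => /eigenvalueP [v Hv vn0].
have [i vi0 imax] := row_max_coord v vn0.
have eig_i : a * v 0 i = \sum_j v 0 j * adjmx R e j i.
  by have := congr1 (fun M : 'M[R]_(1, n) => M 0 i) Hv; rewrite !mxE.
have bound : `|a| * `|v 0 i| <= k%:R * `|v 0 i|.
  rewrite -normrM eig_i -(adjmx_col_sum R i sym reg) mulr_suml.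
  apply: le_trans (ler_norm_sum _ _ _) _; apply: ler_sum => j _.
  rewrite normrM mulrC mxE; case: (e j i) => /=.
  - by rewrite normr1 !mul1r.
  - by rewrite normr0 !mul0r.
by rewrite -(ler_pM2r (_ : 0 < `|v 0 i|)) ?normr_gt0.
Qed.

Lemma connected_has_edge {n : nat} {e : rel 'I_n} :
  (2 <= n)%N -> connected_graph e -> exists u v, e u v.
Proof.
move=> n2 conn; have := conn (Ordinal (ltnW n2)) (Ordinal n2).
case/connectP => [[|z p]] /=; first by move=> _ /(congr1 val).
by case/andP => ez _ _; exists (Ordinal (ltnW n2)), z.
Qed.

Lemma span_ge_diff {n : nat} (f : 'I_n -> nat) (u v : 'I_n) :
  (f u - f v <= Defs.span f)%N.
Proof.
rewrite /Defs.span.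
apply: leq_trans (@leq_bigmax _ (fun v0 => f u - f v0)%N v) _.
exact: (@leq_bigmax _ (fun u0 => \max_(v0 : 'I_n) (f u0 - f v0))%N u).
Qed.

Lemma L21_span_ge2 {n : nat} {e : rel 'I_n} {f : 'I_n -> nat} {u v : 'I_n} :
  L21_colouring e f -> e u v -> (2 <= Defs.span f)%N.
Proof.
move=> [adj _] euv; have := adj u v euv.
have := span_ge_diff f u v; have := span_ge_diff f v u.
by case: (leqP (f u) (f v)) => [le|/ltnW lt];
  [rewrite distnEr | rewrite distnEl] => //; lia.
Qed.

Lemma sqrt_ratio_half_ge1 (R : rcfType) {n : nat} :
  (2 <= n)%N -> 1 <= Num.sqrt (n%:R / (n./2)%:R : R).
Proof.
move=> n2; have half_gt0 : (0 < n./2)%N by case: n n2 => [|[|m]].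
rewrite -[X in X <= _]sqrtr1 ler_sqrt ?divr_ge0 ?ler0n //.
by rewrite ler_pdivlMr ?ltr0n // mul1r ler_nat; lia.
Qed.

Theorem corollary2p3 (R : rcfType) (n k : nat) (e : rel 'I_n)
  (mu : seq R) (l : nat) :
  (2 <= n)%N ->
  simple_graph e -> connected_graph e -> regular e k ->
  eigen_list (adjmx R e) mu ->
  is_lambda21 e l ->
  k%:R - mu`_1 < 2 * k%:R * l%:R * Num.sqrt (n%:R / (n./2)%:R).
Proof.
move=> n2 [sym _] conn reg [szmu _ cp] [[f [colf <-]] _].
have [u [v euv]] := connected_has_edge n2 conn.
have k_gt0 : (0 : R) < k%:R.
  by rewrite ltr0n -(reg u) card_gt0; apply/set0Pn; exists v; rewrite inE.
have l_ge2 : (2 : R) <= (Defs.span f)%:R by rewrite ler_nat (L21_span_ge2 colf euv).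
have mu1_ge : - k%:R <= mu`_1.
  have root_mu1 : root (char_poly (adjmx R e)) mu`_1.
    by rewrite cp root_prod_XsubC mem_nth // szmu.
  by have /ler_normlP[] := adj_eigenvalue_norm sym reg root_mu1; rewrite lerNl.
have s_ge1 := sqrt_ratio_half_ge1 R n2.
move: l_ge2 s_ge1; set L := (Defs.span f)%:R; set s := Num.sqrt _ => l_ge2 s_ge1.
have kL_ge : k%:R * 2 <= k%:R * L by rewrite ler_pM2l.
have kLs_ge : k%:R * L <= k%:R * L * s.
  by rewrite -{1}(mulr1 (k%:R * L)) ler_pM2l ?mulr_gt0 ?(lt_le_trans _ l_ge2).
lra.
Qed.
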